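(* Let $y_0\in\mathbb{R}$, $b>0$, $\epsilon>0$, and let $f:[y_0,\infty)\to\mathbb{R}$ be such that $p:=1/f$ is well defined and twice differentiable on $[y_0,\infty)$, with $f(y_0)>0$, $f'(y)>0$ and $p''(y)>0$ for all $y\ge y_0$. Assume $b<\int_{y_0}^{\infty}p(y)\,dy$ (possibly $+\infty$). For $h>0$ and integers $N\ge0$ define $$\Sigma_{l,h,N}=\sum_{i=1}^{N}h\,p(y_0+hi),\qquad \Sigma_{t,h,N}=\sum_{i=1}^{N}\frac h2\big(p(y_0+hi)+p(y_0+h(i-1))\big),$$ and set $\Sigma_{t,h,N}=0$ for integers $N<0$. For each positive integer $j$ let $h^{(j)}=\epsilon/j$ and let $n_2^{(j)}$ be the smallest positive integer $N$ with $\Sigma_{l,h^{(j)},N}\ge b$; assume $n_2^{(1)}$ exists. Consider Algorithm 1: for $j=1,2,3,\dots$, compute $n_2^{(j)}$ and stop as soon as $\Sigma_{t,h^{(j)},\,n_2^{(j)}-j}\le b$. Then Algorithm 1 stops after finitely many iterations, i.e. there exists a positive integer $j$ with $\Sigma_{t,h^{(j)},\,n_2^{(j)}-j}\le b$.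
   Context: $\Sigma_{l,h,N}$ and $\Sigma_{t,h,N}$ are the lower rectangular and trapezoidal sums with step $h$ for $\int_{y_0}^{y_0+hN}p(y)\,dy$ (empty sums are $0$). When Algorithm 1 stops at iteration $j$, it outputs an approximation such as $y_0+h^{(j)}n_2^{(j)}$ to the number $Y$ defined by $\int_{y_0}^{Y}p(y)\,dy=b$ (the value at $x=b$ of the solution of $y'=f(y)$, $y(0)=y_0$). *)

From Stdlib Require Import Reals Lra ZArith.
From Coquelicot Require Import Coquelicot.
Open Scope R_scope.

Definition is_derive_on_from (a : R) (g : R -> R) (x l : R) : Prop :=
  filterlim (fun t => (g t - g x) / (t - x))
    (within (fun t => a <= t /\ t <> x) (locally x)) (locally l).

Fixpoint Sigma_l (p : R -> R) (y0 h : R) (N : nat) : R :=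
  match N with
  | O => 0
  | S n => Sigma_l p y0 h n + h * p (y0 + h * INR (S n))
  end.

Fixpoint Sigma_t_nat (p : R -> R) (y0 h : R) (N : nat) : R :=
  match N with
  | O => 0
  | S n => Sigma_t_nat p y0 h n
           + h / 2 * (p (y0 + h * INR (S n)) + p (y0 + h * INR n))
  end.

Definition Sigma_t (p : R -> R) (y0 h : R) (N : Z) : R :=
  if (N <? 0)%Z then 0 else Sigma_t_nat p y0 h (Z.to_nat N).

Definition is_n2 (p : R -> R) (y0 b h : R) (n : nat) : Prop :=
  (1 <= n)%nat /\ b <= Sigma_l p y0 h n /\
  (forall M : nat, (1 <= M)%nat -> (M < n)%nat -> Sigma_l p y0 h M < b).

From Stdlib Require Import Reals ZArith Lra Lia.
From Coquelicot Require Import Coquelicot.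
Open Scope R_scope.

(* Since f increases, p = 1/f is positive and decreasing, so the lower sum
   underestimates the integral by at most h p(y0): once h p(y0) is smaller than
   the excess of the integral over b on some [y0, X], the index n_2 exists and
   its last rectangle but one still lies left of X.  The trapezoidal sum over
   n_2 - j nodes equals the lower sum plus at most h p(y0)/2, while dropping the
   j - 1 rectangles before node n_2 - 1 removes at least (j - 1) h p(X); for j
   large both conditions hold and the trapezoidal sum stays below the lower sum
   over n_2 - 1 nodes, which is < b. *)

Lemma is_derive_on_from_quotient a g x l e :
  is_derive_on_from a g x l -> 0 < e ->
  exists d, 0 < d /\ forall t, a <= t -> t <> x -> Rabs (t - x) < d ->
    Rabs ((g t - g x) / (t - x) - l) < e.
Proof.
  intros Hg He.
  destruct (Hg (fun y => Rabs (y - l) < e)) as [d Hd].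
  { exists (mkposreal e He); intros y Hy; exact Hy. }
  exists d; split; [apply cond_pos |].
  intros t Hat Htx Htd; apply (Hd t); [exact Htd | split; assumption].
Qed.

Lemma is_derive_on_from_interior a g x l :
  a < x -> is_derive_on_from a g x l -> is_derive g x l.
Proof.
  intros Hax Hg; apply is_derive_Reals; intros e He.
  destruct (is_derive_on_from_quotient a g x l e Hg He) as [d [Hd Hq]].
  assert (Hm : 0 < Rmin d (x - a)) by (apply Rmin_pos; lra).
  exists (mkposreal _ Hm); intros k Hk Hkd; simpl in Hkd.
  pose proof (Rmin_l d (x - a)); pose proof (Rmin_r d (x - a)).
  apply Rabs_lt_between in Hkd.
  specialize (Hq (x + k)); replace (x + k - x) with k in Hq by ring.
  apply Hq; [lra | lra | apply Rabs_lt_between; lra].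
Qed.

Lemma is_derive_on_from_lipschitz a g x l :
  is_derive_on_from a g x l ->
  exists d K, 0 < d /\ 0 < K /\
    forall t, a <= t -> Rabs (t - x) < d -> Rabs (g t - g x) <= K * Rabs (t - x).
Proof.
  intros Hg; destruct (is_derive_on_from_quotient a g x l 1 Hg Rlt_0_1) as [d [Hd Hq]].
  exists d, (Rabs l + 1); pose proof (Rabs_pos l).
  split; [exact Hd | split; [lra |]]; intros t Hat Htd.
  destruct (Req_dec t x) as [-> | Htx].
  - rewrite Rminus_diag, Rabs_R0; pose proof (Rabs_pos (x - x)); nra.
  - specialize (Hq t Hat Htx Htd).
    pose proof (Rabs_triang_inv ((g t - g x) / (t - x)) l).
    replace (g t - g x) with ((g t - g x) / (t - x) * (t - x)) by (field; lra).
    rewrite Rabs_mult; apply Rmult_le_compat_r; [apply Rabs_pos | lra].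
Qed.

Lemma continuous_of_lipschitz_at g x d K :
  0 < d -> 0 < K ->
  (forall t, Rabs (t - x) < d -> Rabs (g t - g x) <= K * Rabs (t - x)) ->
  continuous g x.
Proof.
  intros Hd HK Hg; apply filterlim_locally; intros e.
  assert (Hm : 0 < Rmin d (e / K))
    by (apply Rmin_pos; [lra | apply Rdiv_lt_0_compat; [apply cond_pos | lra]]).
  exists (mkposreal _ Hm); intros t Ht.
  change (Rabs (t - x) < Rmin d (e / K)) in Ht; change (Rabs (g t - g x) < e).
  pose proof (Rmin_l d (e / K)); pose proof (Rmin_r d (e / K)).
  assert (HKe : K * (e / K) = e) by (field; lra).
  specialize (Hg t ltac:(lra)); nra.
Qed.

(* Clamping the argument at [a] extends [g] continuously to the left of [a],
   which is what the two-sided integrability criterion needs at the endpoint. *)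
Lemma is_derive_on_from_continuous_clamp a g x l :
  a <= x -> is_derive_on_from a g x l -> continuous (fun t => g (Rmax t a)) x.
Proof.
  intros Hax Hg.
  destruct (is_derive_on_from_lipschitz a g x l Hg) as [d [K [Hd [HK Hlip]]]].
  apply (continuous_of_lipschitz_at _ x d K Hd HK); intros t Htd.
  rewrite (Rmax_left x a Hax).
  assert (Hclamp : Rabs (Rmax t a - x) <= Rabs (t - x)).
  { unfold Rmax, Rabs; destruct (Rle_dec t a); repeat destruct Rcase_abs; lra. }
  eapply Rle_trans; [apply Hlip; [apply Rmax_r | lra] |].
  apply Rmult_le_compat_l; lra.
Qed.

Lemma ex_RInt_of_is_derive_on_from a g g' :
  (forall y, a <= y -> is_derive_on_from a g y (g' y)) ->
  forall u v, a <= u -> u <= v -> ex_RInt g u v.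
Proof.
  intros Hg u v Hau Huv.
  apply (ex_RInt_ext (fun t => g (Rmax t a))).
  - intros x Hx; rewrite Rmin_left, Rmax_right in Hx by lra.
    rewrite Rmax_left by lra; reflexivity.
  - apply (@ex_RInt_continuous R_CompleteNormedModule); intros z Hz; rewrite Rmin_left, Rmax_right in Hz by lra.
    apply is_derive_on_from_continuous_clamp with (g' z); [lra | apply Hg; lra].
Qed.

Lemma is_derive_on_from_pos_right a g x l :
  a <= x -> 0 < l -> is_derive_on_from a g x l ->
  forall v, x < v -> exists t, x < t < v /\ g x < g t.
Proof.
  intros Hax Hl Hg v Hxv.
  destruct (is_derive_on_from_quotient a g x l l Hg Hl) as [d [Hd Hq]].
  set (t := x + Rmin d (v - x) / 2).
  assert (Hm : 0 < Rmin d (v - x)) by (apply Rmin_pos; lra).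
  pose proof (Rmin_l d (v - x)); pose proof (Rmin_r d (v - x)).
  assert (Htx : 0 < t - x) by (unfold t; lra).
  exists t; split; [unfold t; lra |].
  assert (Hpos : 0 < (g t - g x) / (t - x)).
  { assert (Htd : Rabs (t - x) < d) by (rewrite Rabs_right by lra; unfold t; lra).
    specialize (Hq t ltac:(lra) ltac:(lra) Htd); apply Rabs_lt_between in Hq; lra. }
  assert (Hprod : 0 < (g t - g x) / (t - x) * (t - x)) by (apply Rmult_lt_0_compat; lra).
  replace ((g t - g x) / (t - x) * (t - x)) with (g t - g x) in Hprod by (field; lra).
  lra.
Qed.

Lemma is_derive_on_from_increasing a g g' :
  (forall y, a <= y -> is_derive_on_from a g y (g' y)) ->
  (forall y, a <= y -> 0 < g' y) ->
  forall u v, a <= u -> u < v -> g u < g v.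
Proof.
  intros Hg Hpos.
  assert (Hinterior : forall u v, a < u -> u < v -> g u < g v).
  { intros u v Hau Huv.
    assert (Hder : forall x, u <= x <= v -> is_derive g x (g' x))
      by (intros x Hx; apply (is_derive_on_from_interior a); [lra | apply Hg; lra]).
    destruct (MVT_gen g u v g') as [c [Hc Hmvt]];
      rewrite ?Rmin_left, ?Rmax_right in * by lra.
    - intros x Hx; apply Hder; lra.
    - intros x Hx; apply continuity_pt_filterlim, (ex_derive_continuous g).
      exists (g' x); apply Hder, Hx.
    - assert (0 < g' c) by (apply Hpos; lra); nra. }
  intros u v Hau Huv.
  destruct (is_derive_on_from_pos_right a g u (g' u) Hau (Hpos u Hau) (Hg u Hau) v Huv)
    as [t [Ht Hgt]].
  pose proof (Hinterior t v ltac:(lra) ltac:(lra)); lra.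
Qed.

Lemma Sigma_t_nat_Sigma_l p y0 h m :
  Sigma_t_nat p y0 h m = Sigma_l p y0 h m + h / 2 * (p y0 - p (y0 + h * INR m)).
Proof.
  induction m as [| m IHm]; cbn [Sigma_t_nat Sigma_l].
  - rewrite Rmult_0_r, Rplus_0_r; ring.
  - rewrite IHm; field.
Qed.

Lemma Sigma_t_of_nat_sub p y0 h n j :
  (j <= n)%nat -> Sigma_t p y0 h (Z.of_nat n - Z.of_nat j) = Sigma_t_nat p y0 h (n - j).
Proof.
  intros Hjn; unfold Sigma_t.
  replace (Z.of_nat n - Z.of_nat j <? 0)%Z with false by (symmetry; apply Z.ltb_ge; lia).
  rewrite <- Nat2Z.inj_sub, Nat2Z.id by exact Hjn; reflexivity.
Qed.

Lemma Sigma_t_of_nat_sub_neg p y0 h n j :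
  (n < j)%nat -> Sigma_t p y0 h (Z.of_nat n - Z.of_nat j) = 0.
Proof.
  intros Hnj; unfold Sigma_t.
  replace (Z.of_nat n - Z.of_nat j <? 0)%Z with true by (symmetry; apply Z.ltb_lt; lia).
  reflexivity.
Qed.

Lemma is_n2_exists p y0 b h N :
  0 < b -> b <= Sigma_l p y0 h N -> exists n, is_n2 p y0 b h n.
Proof.
  intros Hb HN.
  assert (Hsearch : forall K, (exists n, is_n2 p y0 b h n) \/
                      forall M, (1 <= M)%nat -> (M <= K)%nat -> Sigma_l p y0 h M < b).
  { induction K as [| K [Hfound | Hbelow]].
    - right; intros M HM1 HM0; lia.
    - left; exact Hfound.
    - destruct (Rle_lt_dec b (Sigma_l p y0 h (S K))) as [Hge | Hlt].
      + left; exists (S K); split; [lia | split; [exact Hge |]].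
        intros M HM1 HMK; apply Hbelow; lia.
      + right; intros M HM1 HMK.
        destruct (Nat.eq_dec M (S K)) as [-> | HM]; [exact Hlt | apply Hbelow; lia]. }
  destruct (Hsearch N) as [Hfound | Hbelow]; [exact Hfound |].
  destruct N as [| N]; [simpl in HN; lra |].
  specialize (Hbelow (S N) ltac:(lia) (le_n _)); lra.
Qed.

Lemma is_n2_Sigma_l_pred_lt p y0 b h n :
  0 < b -> is_n2 p y0 b h n -> Sigma_l p y0 h (pred n) < b.
Proof.
  intros Hb [Hn1 [_ Hmin]].
  destruct n as [| [| n]]; [lia | simpl; exact Hb | apply Hmin; simpl; lia].
Qed.

Section DecreasingIntegrand.

Variables (p : R -> R) (y0 : R).
Hypothesis p_pos : forall y, y0 <= y -> 0 < p y.
Hypothesis p_decr : forall u v, y0 <= u -> u <= v -> p v <= p u.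
Hypothesis p_int : forall u v, y0 <= u -> u <= v -> ex_RInt p u v.

Lemma node_ge h N : 0 < h -> y0 <= y0 + h * INR N.
Proof. intros Hh; pose proof (pos_INR N); nra. Qed.

Lemma RInt_le_length_mul u v : y0 <= u -> u <= v -> RInt p u v <= (v - u) * p u.
Proof.
  intros Hu Huv.
  eapply Rle_trans; [apply (RInt_le p (fun _ => p u)) |].
  - exact Huv.
  - apply p_int; lra.
  - apply ex_RInt_const.
  - intros x Hx; apply p_decr; lra.
  - rewrite RInt_const; apply Rle_refl.
Qed.

Lemma RInt_upper_le u v : y0 <= u -> u <= v -> RInt p y0 u <= RInt p y0 v.
Proof.
  intros Hu Huv.
  rewrite <- (RInt_Chasles p y0 u v) by (apply p_int; lra).
  assert (0 <= RInt p u v); [| change plus with Rplus; lra].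
  apply RInt_ge_0; [exact Huv | apply p_int; lra |].
  intros x Hx; apply Rlt_le, p_pos; lra.
Qed.

(* The right-hand side is the left-endpoint Riemann sum. *)
Lemma RInt_le_left_sum h N : 0 < h ->
  RInt p y0 (y0 + h * INR N) <= Sigma_l p y0 h N + h * p y0 - h * p (y0 + h * INR N).
Proof.
  intros Hh; induction N as [| N IHN].
  - simpl; rewrite Rmult_0_r, Rplus_0_r, RInt_point; change zero with 0; lra.
  - assert (Hstep : y0 + h * INR (S N) = y0 + h * INR N + h) by (rewrite S_INR; ring).
    rewrite <- (RInt_Chasles p y0 (y0 + h * INR N))
      by (apply p_int; rewrite ?Hstep; pose proof (node_ge h N Hh); lra).
    change plus with Rplus.
    pose proof (RInt_le_length_mul (y0 + h * INR N) (y0 + h * INR (S N))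
                  (node_ge h N Hh) ltac:(lra)) as Hlast.
    rewrite Hstep in Hlast |- *; cbn [Sigma_l]; rewrite Hstep.
    replace (y0 + h * INR N + h - (y0 + h * INR N)) with h in Hlast by ring.
    lra.
Qed.

Lemma RInt_le_Sigma_l h N : 0 < h ->
  RInt p y0 (y0 + h * INR N) <= Sigma_l p y0 h N + h * p y0.
Proof.
  intros Hh; pose proof (RInt_le_left_sum h N Hh).
  pose proof (p_pos _ (node_ge h N Hh)); nra.
Qed.

Lemma Sigma_l_add_ge h m k : 0 < h ->
  Sigma_l p y0 h m + INR k * h * p (y0 + h * INR (m + k)) <= Sigma_l p y0 h (m + k).
Proof.
  intros Hh; induction k as [| k IHk].
  - rewrite Nat.add_0_r; simpl; lra.
  - rewrite <- plus_n_Sm; cbn [Sigma_l]; rewrite (S_INR k).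
    assert (p (y0 + h * INR (S (m + k))) <= p (y0 + h * INR (m + k)))
      by (apply p_decr; [apply node_ge, Hh | rewrite S_INR; lra]).
    assert (0 <= INR k * h) by (pose proof (pos_INR k); nra); nra.
Qed.

Lemma Sigma_t_nat_le_Sigma_l h m k : 0 < h ->
  p y0 <= 2 * INR k * p (y0 + h * INR (m + k)) ->
  Sigma_t_nat p y0 h m <= Sigma_l p y0 h (m + k).
Proof.
  intros Hh Hk; rewrite Sigma_t_nat_Sigma_l.
  pose proof (Sigma_l_add_ge h m k Hh).
  pose proof (p_pos _ (node_ge h m Hh)); nra.
Qed.

Variables (b X : R).
Hypothesis b_pos : 0 < b.
Hypothesis X_ge : y0 <= X.

Lemma is_n2_exists_of_RInt h : 0 < h -> b + h * p y0 < RInt p y0 X ->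
  exists n, is_n2 p y0 b h n.
Proof.
  intros Hh HX.
  destruct (INR_unbounded ((X - y0) / h)) as [N HN].
  apply (is_n2_exists p y0 b h N b_pos).
  assert (HXN : X <= y0 + h * INR N).
  { assert (E : X - y0 = (X - y0) / h * h) by (field; lra); nra. }
  pose proof (RInt_upper_le X _ X_ge HXN); pose proof (RInt_le_Sigma_l h N Hh); lra.
Qed.

Lemma is_n2_pred_node_lt h n : 0 < h -> b + h * p y0 < RInt p y0 X ->
  is_n2 p y0 b h n -> y0 + h * INR (pred n) < X.
Proof.
  intros Hh HX Hn; apply Rnot_le_lt; intros HXn.
  pose proof (is_n2_Sigma_l_pred_lt p y0 b h n b_pos Hn).
  pose proof (RInt_upper_le X _ X_ge HXn); pose proof (RInt_le_Sigma_l h (pred n) Hh); lra.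
Qed.

Lemma Sigma_t_le_of_is_n2 h j n : 0 < h -> (1 <= j)%nat ->
  b + h * p y0 < RInt p y0 X -> p y0 <= 2 * (INR j - 1) * p X ->
  is_n2 p y0 b h n -> Sigma_t p y0 h (Z.of_nat n - Z.of_nat j) <= b.
Proof.
  intros Hh Hj HX HjX Hn.
  destruct (le_lt_dec j n) as [Hjn | Hnj];
    [| rewrite Sigma_t_of_nat_sub_neg by exact Hnj; lra].
  rewrite Sigma_t_of_nat_sub by exact Hjn.
  pose proof (is_n2_Sigma_l_pred_lt p y0 b h n b_pos Hn) as Hbelow.
  pose proof (is_n2_pred_node_lt h n Hh HX Hn) as Hnode.
  assert (Hsplit : (n - j + (j - 1) = pred n)%nat) by lia.
  assert (Hle : Sigma_t_nat p y0 h (n - j) <= Sigma_l p y0 h (pred n)).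
  { rewrite <- Hsplit; apply Sigma_t_nat_le_Sigma_l; [exact Hh |].
    rewrite Hsplit, minus_INR by exact Hj; simpl INR.
    assert (p X <= p (y0 + h * INR (pred n))) by (apply p_decr; [apply node_ge, Hh | lra]).
    assert (1 <= INR j) by (apply (le_INR 1) in Hj; exact Hj).
    nra. }
  lra.
Qed.

End DecreasingIntegrand.

Lemma exists_RInt_gt (g : R -> R) (a b : R) (l : Rbar) :
  is_lim (fun Y => RInt g a Y) p_infty l -> Rbar_lt b l ->
  exists X, a < X /\ b < RInt g a X.
Proof.
  intros Hlim Hbl.
  destruct (Hlim (fun r => b < r)) as [M HM].
  { destruct l as [r | |]; simpl in Hbl; try contradiction.
    - assert (Hr : 0 < r - b) by lra; exists (mkposreal _ Hr); intros y Hy.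
      change (Rabs (y - r) < r - b) in Hy; apply Rabs_lt_between' in Hy; lra.
    - exists b; intros x Hx; exact Hx. }
  exists (Rmax M a + 1); split.
  - pose proof (Rmax_r M a); lra.
  - apply HM; pose proof (Rmax_l M a); lra.
Qed.

Lemma exists_step_count eps a c d : 0 < eps -> 0 < a -> 0 < c -> 0 < d ->
  exists j, (1 <= j)%nat /\ eps / INR j * a < c /\ a <= 2 * (INR j - 1) * d.
Proof.
  intros He Ha Hc Hd.
  destruct (INR_unbounded (eps * a / c + a / (2 * d) + 1)) as [j Hj].
  assert (H1 : 0 < eps * a / c) by (apply Rdiv_lt_0_compat; nra).
  assert (H2 : 0 < a / (2 * d)) by (apply Rdiv_lt_0_compat; lra).
  assert (Hj1 : (1 <= j)%nat) by (apply INR_lt; simpl; lra).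
  exists j; split; [exact Hj1 | split].
  - apply (Rmult_lt_reg_r (INR j)); [lra |].
    replace (eps / INR j * a * INR j) with (eps * a / c * c) by (field; lra).
    nra.
  - replace a with (a / (2 * d) * (2 * d)) at 1 by (field; lra); nra.
Qed.

Theorem theorem1
  (y0 b eps : R) (f : R -> R)
  (hb : 0 < b) (heps : 0 < eps)
  (hf_nz : forall y, y0 <= y -> f y <> 0)
  (hf0 : 0 < f y0)
  (f' : R -> R)
  (hf'_der : forall y, y0 <= y -> is_derive_on_from y0 f y (f' y))
  (hf'_pos : forall y, y0 <= y -> 0 < f' y)
  (p' p'' : R -> R)
  (hp'_der : forall y, y0 <= y -> is_derive_on_from y0 (fun t => / f t) y (p' y))
  (hp''_der : forall y, y0 <= y -> is_derive_on_from y0 p' y (p'' y))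
  (hp''_pos : forall y, y0 <= y -> 0 < p'' y)
  (hint : exists l : Rbar,
      is_lim (fun Y => RInt (fun t => / f t) y0 Y) p_infty l /\ Rbar_lt (Finite b) l)
  (hn21 : exists n : nat, is_n2 (fun t => / f t) y0 b (eps / INR 1) n) :
  exists (j n : nat),
    (1 <= j)%nat /\ is_n2 (fun t => / f t) y0 b (eps / INR j) n /\
    Sigma_t (fun t => / f t) y0 (eps / INR j) (Z.of_nat n - Z.of_nat j)%Z <= b.
Proof.
  set (p := fun t => / f t).
  pose proof (is_derive_on_from_increasing y0 f f' hf'_der hf'_pos) as f_incr.
  assert (f_pos : forall y, y0 <= y -> 0 < f y).
  { intros y Hy; destruct (Req_dec y y0) as [-> | Hne]; [exact hf0 |].
    pose proof (f_incr y0 y (Rle_refl _) ltac:(lra)); lra. }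
  assert (p_pos : forall y, y0 <= y -> 0 < p y)
    by (intros y Hy; apply Rinv_0_lt_compat, f_pos, Hy).
  assert (p_decr : forall u v, y0 <= u -> u <= v -> p v <= p u).
  { intros u v Hu Huv; destruct (Req_dec u v) as [-> | Hne]; [lra |].
    apply Rinv_le_contravar; [apply f_pos, Hu | apply Rlt_le, f_incr; lra]. }
  pose proof (ex_RInt_of_is_derive_on_from y0 p p' hp'_der) as p_int.
  destruct hint as [l [Hlim Hbl]].
  destruct (exists_RInt_gt p y0 b l Hlim Hbl) as [X [HX HbX]].
  destruct (exists_step_count eps (p y0) (RInt p y0 X - b) (p X) heps)
    as [j [Hj [Hstep Hcount]]]; [apply p_pos; lra | lra | apply p_pos; lra |].
  set (h := eps / INR j) in *.
  assert (Hh : 0 < h) by (apply Rdiv_lt_0_compat; [exact heps | apply lt_0_INR; lia]).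
  assert (HbXh : b + h * p y0 < RInt p y0 X) by lra.
  destruct (is_n2_exists_of_RInt p y0 p_pos p_decr p_int b X hb ltac:(lra) h Hh HbXh)
    as [n Hn].
  exists j, n; split; [exact Hj | split; [exact Hn |]].
  exact (Sigma_t_le_of_is_n2 p y0 p_pos p_decr p_int b X hb ltac:(lra) h j n
           Hh Hj HbXh Hcount Hn).
Qed.
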